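(* Let $\mathcal{C}$ be a skeletally small triangulated category with split idempotents and suspension $\Sigma$. If $A\xrightarrow{a}B\xrightarrow{b}C\xrightarrow{c}\Sigma A$ and $A'\xrightarrow{a'}B'\xrightarrow{b'}C'\xrightarrow{c'}\Sigma A'$ are triangles in $\mathcal{C}$ and $\operatorname{Im}\mathbb{Y}c\cong\operatorname{Im}\mathbb{Y}c'$ in $\operatorname{mod}\mathcal{C}$, then $[A]^{sp}-[B]^{sp}+[C]^{sp}=[A']^{sp}-[B']^{sp}+[C']^{sp}$ in $K_0^{sp}(\mathcal{C})$.
   Context: $\operatorname{mod}\mathcal{C}$ is the abelian category of finitely presented additive functors $\mathcal{C}^{op}\to\mathrm{Ab}$. $\mathbb{Y}\colon\mathcal{C}\to\operatorname{mod}\mathcal{C}$, $C\mapsto\mathcal{C}(-,C)$, is the Yoneda embedding, and $\operatorname{Im}\mathbb{Y}c$ is the image of $\mathcal{C}(-,c)\colon\mathcal{C}(-,C)\to\mathcal{C}(-,\Sigma A)$. $K_0^{sp}(\mathcal{C})$ is the split Grothendieck group: the free abelian group on isomorphism classes of objects modulo $[A\oplus B]=[A]+[B]$; $[C]^{sp}$ denotes the class of $C$. *)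

From HB Require Import structures.
From mathcomp Require Import all_boot all_algebra.
Set Implicit Arguments. Unset Strict Implicit. Unset Printing Implicit Defensive.
Import GRing.Theory.
Local Open Scope ring_scope.

Record TriData := {
  Ob : Type;
  Mor : Ob -> Ob -> zmodType;
  idm : forall X : Ob, Mor X X;
  comp : forall X Y Z : Ob, Mor Y Z -> Mor X Y -> Mor X Z;
  Sig : Ob -> Ob;
  sigm : forall X Y : Ob, Mor X Y -> Mor (Sig X) (Sig Y);
  dist : forall A B C : Ob, Mor A B -> Mor B C -> Mor C (Sig A) -> Prop
}.
Arguments idm {t} X.
Arguments comp {t X Y Z} g f.
Arguments Sig {t} X.
Arguments sigm {t X Y} f.
Arguments dist {t A B C} a b c.

Section TriAx.
Variable T : TriData.
Local Notation Ob := (Ob T).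
Local Notation Mor := (@Mor T).

Definition is_iso (X Y : Ob) (f : Mor X Y) : Prop :=
  exists g : Mor Y X, comp g f = idm X /\ comp f g = idm Y.

Definition iso_obj (X Y : Ob) : Prop := exists f : Mor X Y, is_iso f.

Definition preadditive_ax : Prop :=
  [/\ (forall (W X Y Z : Ob) (h : Mor Y Z) (g : Mor X Y) (f : Mor W X),
         comp h (comp g f) = comp (comp h g) f),
      (forall (X Y : Ob) (f : Mor X Y), comp (idm Y) f = f),
      (forall (X Y : Ob) (f : Mor X Y), comp f (idm X) = f),
      (forall (X Y Z : Ob) (g g' : Mor Y Z) (f : Mor X Y),
         comp (g + g') f = comp g f + comp g' f) &
      (forall (X Y Z : Ob) (g : Mor Y Z) (f f' : Mor X Y),
         comp g (f + f') = comp g f + comp g f')].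

Definition is_zero_obj (Z : Ob) : Prop :=
  (forall (X : Ob) (f : Mor Z X), f = 0) /\ (forall (X : Ob) (f : Mor X Z), f = 0).

Definition is_biproduct (A B P : Ob) (i1 : Mor A P) (i2 : Mor B P)
  (p1 : Mor P A) (p2 : Mor P B) : Prop :=
  [/\ comp p1 i1 = idm A, comp p2 i2 = idm B, comp p1 i2 = 0, comp p2 i1 = 0 &
      comp i1 p1 + comp i2 p2 = idm P].

Definition biprod_of (A B P : Ob) : Prop :=
  exists i1 i2 p1 p2, @is_biproduct A B P i1 i2 p1 p2.

Definition additive_ax : Prop :=
  [/\ preadditive_ax, (exists Z : Ob, is_zero_obj Z) &
      (forall A B : Ob, exists P : Ob, biprod_of A B P)].

Definition suspension_ax : Prop :=
  [/\ (forall (X Y : Ob) (f g : Mor X Y), sigm (f + g) = sigm f + sigm g),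
      (forall X : Ob, sigm (idm X) = idm (Sig X)),
      (forall (X Y Z : Ob) (g : Mor Y Z) (f : Mor X Y),
         sigm (comp g f) = comp (sigm g) (sigm f)),
      (forall X Y : Ob, bijective (@sigm T X Y)) &
      (forall Y : Ob, exists X : Ob, iso_obj (Sig X) Y)].

Definition TR1 : Prop :=
  [/\ (forall (A B C A' B' C' : Ob) (a : Mor A B) (b : Mor B C) (c : Mor C (Sig A))
          (a' : Mor A' B') (b' : Mor B' C') (c' : Mor C' (Sig A'))
          (u : Mor A A') (v : Mor B B') (w : Mor C C'),
         dist a b c -> is_iso u -> is_iso v -> is_iso w ->
         comp a' u = comp v a -> comp b' v = comp w b -> comp c' w = comp (sigm u) c ->
         dist a' b' c'),
      (forall X Z : Ob, is_zero_obj Z ->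
         dist (idm X) (0 : Mor X Z) (0 : Mor Z (Sig X))) &
      (forall (A B : Ob) (a : Mor A B),
         exists (C : Ob) (b : Mor B C) (c : Mor C (Sig A)), dist a b c)].

Definition TR2 : Prop :=
  forall (A B C : Ob) (a : Mor A B) (b : Mor B C) (c : Mor C (Sig A)),
    dist a b c <-> dist b c (- sigm a).

Definition TR3 : Prop :=
  forall (A B C A' B' C' : Ob) (a : Mor A B) (b : Mor B C) (c : Mor C (Sig A))
         (a' : Mor A' B') (b' : Mor B' C') (c' : Mor C' (Sig A'))
         (u : Mor A A') (v : Mor B B'),
    dist a b c -> dist a' b' c' -> comp a' u = comp v a ->
    exists w : Mor C C', comp b' v = comp w b /\ comp c' w = comp (sigm u) c.

Definition TR4 : Prop :=
  forall (X Y Z Z' X' Y' : Ob) (f : Mor X Y) (g : Mor Y Z)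
         (f1 : Mor Y Z') (f2 : Mor Z' (Sig X))
         (g1 : Mor Z X') (g2 : Mor X' (Sig Y))
         (h1 : Mor Z Y') (h2 : Mor Y' (Sig X)),
    dist f f1 f2 -> dist g g1 g2 -> dist (comp g f) h1 h2 ->
    exists (u : Mor Z' Y') (v : Mor Y' X'),
      [/\ dist u v (comp (sigm f1) g2),
          comp u f1 = comp h1 g, comp h2 u = f2,
          comp v h1 = g1 & comp g2 v = comp (sigm f) h2].

Definition is_triangulated : Prop :=
  [/\ additive_ax, suspension_ax, TR1, TR2 & (TR3 /\ TR4)].

Definition idempotents_split : Prop :=
  forall (X : Ob) (e : Mor X X), comp e e = e ->
    exists (Y : Ob) (r : Mor X Y) (s : Mor Y X), comp s r = e /\ comp r s = idm Y.

(* Im Y c, for c : C -> Sig A, is the subfunctor of C(-, Sig A) whose value at X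
   is the subgroup of maps X -> Sig A factoring through c. *)
Definition ImY (C D : Ob) (c : Mor C D) (X : Ob) (f : Mor X D) : Prop :=
  exists g : Mor X C, f = comp c g.

(* An isomorphism Im Y c ~= Im Y c' in mod C (a full subcategory of the
   functor category), i.e. a natural isomorphism of additive functors:
   componentwise additive bijections, natural in X. *)
Definition ImY_iso (C D C' D' : Ob) (c : Mor C D) (c' : Mor C' D') : Prop :=
  exists phi : forall X : Ob, Mor X D -> Mor X D',
    [/\ (forall (X : Ob) (f : Mor X D), ImY c f -> ImY c' (phi X f)),
        (forall (X : Ob) (f g : Mor X D), ImY c f -> ImY c g ->
           phi X (f + g) = phi X f + phi X g),
        (forall (X : Ob) (f g : Mor X D), ImY c f -> ImY c g ->
           phi X f = phi X g -> f = g),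
        (forall (X : Ob) (f' : Mor X D'), ImY c' f' ->
           exists2 f : Mor X D, ImY c f & phi X f = f') &
        (forall (X W : Ob) (h : Mor X W) (f : Mor W D), ImY c f ->
           phi X (comp f h) = comp (phi W f) h)].

(* Split Grothendieck group, via its universal property: a map from objects
   to an abelian group factors through K_0^sp(C) iff it is constant on
   isomorphism classes and sends biproducts to sums. Two formal combinations
   are equal in K_0^sp iff they agree under every such map. *)
Definition sp_additive (G : zmodType) (F : Ob -> G) : Prop :=
  (forall X Y : Ob, iso_obj X Y -> F X = F Y) /\
  (forall A B P : Ob, biprod_of A B P -> F P = F A + F B).

Definition K0sp_eq (A B C A' B' C' : Ob) : Prop :=
  forall (G : zmodType) (F : Ob -> G), sp_additive F ->
    F A - F B + F C = F A' - F B' + F C'.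

End TriAx.

From HB Require Import structures.
From mathcomp Require Import all_boot all_algebra.
Set Implicit Arguments. Unset Strict Implicit. Unset Printing Implicit Defensive.
Import GRing.Theory.
Local Open Scope ring_scope.

(* The isomorphism [Im Y c ~= Im Y c'] yields [w : C -> C'] and [w' : C' -> C] with
   [c' w w' = c'] and [c w' w = c], and then, by exactness, [u : Sig A -> Sig A'] and
   [u' : Sig A' -> Sig A] with [c' w = u c] and [c w' = u' c'].  Unitriangular
   automorphisms of [C (+) C'] and [Sig A (+) Sig A'] built from these maps identify the
   arrows [c (+) 0] and [0 (+) c'].  These are the third maps of the distinguished
   triangles [(A -> B -> C) (+) (A' -> A' (+) C' -> C')] and
   [(A -> A (+) C -> C) (+) (A' -> B' -> C')], so the five lemma gives
   [B (+) A' (+) C' ~= A (+) C (+) B'], which is the claim in the split Grothendieck group. *)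

Section Triangulated.
Variable T : TriData.
Hypothesis hT : is_triangulated T.
Local Notation Ob := (Ob T).

Lemma compmA (W X Y Z : Ob) (h : Mor Y Z) (g : Mor X Y) (f : Mor W X) :
  comp h (comp g f) = comp (comp h g) f.
Proof. by case: hT => -[[]]. Qed.

Lemma comp1m (X Y : Ob) (f : Mor X Y) : comp (idm Y) f = f.
Proof. by case: hT => -[[]]. Qed.

Lemma compm1 (X Y : Ob) (f : Mor X Y) : comp f (idm X) = f.
Proof. by case: hT => -[[]]. Qed.

Lemma compmDl (X Y Z : Ob) (g g' : Mor Y Z) (f : Mor X Y) :
  comp (g + g') f = comp g f + comp g' f.
Proof. by case: hT => -[[]]. Qed.

Lemma compmDr (X Y Z : Ob) (g : Mor Y Z) (f f' : Mor X Y) :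
  comp g (f + f') = comp g f + comp g f'.
Proof. by case: hT => -[[]]. Qed.

Lemma comp0m (X Y Z : Ob) (f : Mor X Y) : comp (0 : Mor Y Z) f = 0.
Proof. by apply: (addIr (comp (0 : Mor Y Z) f)); rewrite add0r -compmDl addr0. Qed.

Lemma compm0 (X Y Z : Ob) (g : Mor Y Z) : comp g (0 : Mor X Y) = 0.
Proof. by apply: (addIr (comp g (0 : Mor X Y))); rewrite add0r -compmDr addr0. Qed.

Lemma compNm (X Y Z : Ob) (g : Mor Y Z) (f : Mor X Y) : comp (- g) f = - comp g f.
Proof. by apply/eqP; rewrite -addr_eq0 -compmDl addNr comp0m. Qed.

Lemma compmN (X Y Z : Ob) (g : Mor Y Z) (f : Mor X Y) : comp g (- f) = - comp g f.
Proof. by apply/eqP; rewrite -addr_eq0 -compmDr addNr compm0. Qed.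

Lemma sigmD (X Y : Ob) (f g : Mor X Y) : sigm (f + g) = sigm f + sigm g.
Proof. by case: hT => _ []. Qed.

Lemma sigm1 (X : Ob) : sigm (idm X) = idm (Sig X).
Proof. by case: hT => _ []. Qed.

Lemma sigmM (X Y Z : Ob) (g : Mor Y Z) (f : Mor X Y) :
  sigm (comp g f) = comp (sigm g) (sigm f).
Proof. by case: hT => _ []. Qed.

Lemma sigm0 (X Y : Ob) : sigm (0 : Mor X Y) = 0.
Proof. by apply: (addIr (sigm (0 : Mor X Y))); rewrite add0r -sigmD addr0. Qed.

Lemma sigm_inj (X Y : Ob) : injective (@sigm T X Y).
Proof. by case: hT => _ [_ _ _ /(_ X Y) /bij_inj]. Qed.

Lemma sigm_surj (X Y : Ob) (g : Mor (Sig X) (Sig Y)) : exists f : Mor X Y, g = sigm f.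
Proof.
case: hT => _ [_ _ _ /(_ X Y) [s _ sK] _].
by exists (s g); rewrite sK.
Qed.

Ltac comp_norm :=
  repeat progress rewrite ?compmDl ?compmDr ?compNm ?compmN -?compmA ?comp0m ?compm0
    ?comp1m ?compm1 ?sigmD ?sigmM ?sigm0 ?sigm1 ?opprK ?oppr0 ?addr0 ?add0r.

Lemma exists_zero : exists Z : Ob, is_zero_obj Z.
Proof. by case: hT => -[]. Qed.

Lemma zero_idm (Z : Ob) : is_zero_obj Z -> idm Z = 0.
Proof. by case=> + _; apply. Qed.

Lemma is_zero_Sig (Z : Ob) : is_zero_obj Z -> is_zero_obj (Sig Z).
Proof.
move=> /zero_idm Z0; have S0 : idm (Sig Z) = 0 by rewrite -sigm1 Z0 sigm0.
by split=> X f; [rewrite -(compm1 f) | rewrite -(comp1m f)]; rewrite S0 ?compm0 ?comp0m.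
Qed.

Lemma dist_iso (A B C A' B' C' : Ob) (a : Mor A B) (b : Mor B C) (c : Mor C (Sig A))
    (a' : Mor A' B') (b' : Mor B' C') (c' : Mor C' (Sig A'))
    (u : Mor A A') (v : Mor B B') (w : Mor C C') :
  dist a b c -> is_iso u -> is_iso v -> is_iso w ->
  comp a' u = comp v a -> comp b' v = comp w b -> comp c' w = comp (sigm u) c ->
  dist a' b' c'.
Proof. by case: hT => _ _ [+ _ _] _ _; apply. Qed.

Lemma dist_idm (X Z : Ob) : is_zero_obj Z -> dist (idm X) (0 : Mor X Z) 0.
Proof. by case: hT => _ _ [_ + _] _ _; apply. Qed.

Lemma dist_cone (A B : Ob) (a : Mor A B) :
  exists (C : Ob) (b : Mor B C) (c : Mor C (Sig A)), dist a b c.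
Proof. by case: hT => _ _ [_ _ +] _ _; apply. Qed.

Lemma dist_rotE (A B C : Ob) (a : Mor A B) (b : Mor B C) (c : Mor C (Sig A)) :
  dist b c (- sigm a) <-> dist a b c.
Proof. by case: hT => _ _ _ /(_ _ _ _ a b c) []. Qed.

Lemma dist_rot (A B C : Ob) (a : Mor A B) (b : Mor B C) (c : Mor C (Sig A)) :
  dist a b c -> dist b c (- sigm a).
Proof. by move/dist_rotE. Qed.

Lemma dist_fill (A B C A' B' C' : Ob) (a : Mor A B) (b : Mor B C) (c : Mor C (Sig A))
    (a' : Mor A' B') (b' : Mor B' C') (c' : Mor C' (Sig A'))
    (u : Mor A A') (v : Mor B B') :
  dist a b c -> dist a' b' c' -> comp a' u = comp v a ->
  exists w : Mor C C', comp b' v = comp w b /\ comp c' w = comp (sigm u) c.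
Proof. by case: hT => _ _ _ _ [+ _]; apply. Qed.

Lemma dist_zero_idm (Z W : Ob) : is_zero_obj Z -> dist (0 : Mor Z W) (idm W) 0.
Proof.
move=> /is_zero_Sig Z0; apply/dist_rotE.
by rewrite sigm0 oppr0; apply: dist_idm.
Qed.

Lemma dist_comp0 (X Y Z : Ob) (f : Mor X Y) (g : Mor Y Z) (h : Mor Z (Sig X)) :
  dist f g h -> comp g f = 0.
Proof.
move=> d; have [Z0 Z0zero] := exists_zero.
have [w [-> _]] := dist_fill (dist_idm X Z0zero) d (erefl (comp f (idm X))).
by rewrite compm0.
Qed.

Lemma dist_factor_r (X Y Z W : Ob) (f : Mor X Y) (g : Mor Y Z) (h : Mor Z (Sig X))
    (k : Mor W Y) :
  dist f g h -> comp g k = 0 -> exists n : Mor W X, k = comp f n.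
Proof.
move=> d gk; have [Z0 Z0zero] := exists_zero.
have sq : comp g k = comp (0 : Mor Z0 Z) (0 : Mor W Z0) by rewrite gk compm0.
have [w [_]] := dist_fill (dist_rot (dist_idm W Z0zero)) (dist_rot d) sq.
rewrite compNm compmN sigm1 compm1 => /oppr_inj fw.
have [n wn] := sigm_surj w; exists n.
by apply: sigm_inj; rewrite sigmM -wn fw.
Qed.

Lemma dist_factor_l (X Y Z W : Ob) (f : Mor X Y) (g : Mor Y Z) (h : Mor Z (Sig X))
    (k : Mor Y W) :
  dist f g h -> comp k f = 0 -> exists n : Mor Z W, k = comp n g.
Proof.
move=> d kf; have [Z0 Z0zero] := exists_zero.
have sq : comp (0 : Mor Z0 W) (0 : Mor X Z0) = comp k f by rewrite kf compm0.
have [n [kn _]] := dist_fill d (dist_zero_idm W Z0zero) sq.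
by exists n; rewrite -kn comp1m.
Qed.

Definition hom_exact (X Y Z : Ob) (f : Mor X Y) (g : Mor Y Z) : Prop :=
  comp g f = 0 /\ forall (W : Ob) (k : Mor W Y), comp g k = 0 -> exists n : Mor W X, k = comp f n.

Definition hom_exact3 (X Y Z : Ob) (f : Mor X Y) (g : Mor Y Z) (h : Mor Z (Sig X)) : Prop :=
  [/\ hom_exact f g, hom_exact g h & hom_exact h (sigm f)].

Lemma dist_hom_exact3 (X Y Z : Ob) (f : Mor X Y) (g : Mor Y Z) (h : Mor Z (Sig X)) :
  dist f g h -> hom_exact3 f g h.
Proof.
move=> d; have d1 := dist_rot d; have d2 := dist_rot d1.
split; split.
- exact: dist_comp0 d.
- by move=> W k; apply: dist_factor_r d.
- exact: dist_comp0 d1.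
- by move=> W k; apply: dist_factor_r d1.
- by apply/eqP; rewrite -oppr_eq0 -compNm (dist_comp0 d2).
- by move=> W k fk; apply: dist_factor_r d2 _; rewrite compNm fk oppr0.
Qed.

Lemma iso_idm (X : Ob) : is_iso (idm X).
Proof. by exists (idm X); rewrite comp1m. Qed.

Lemma iso_comp (X Y Z : Ob) (f : Mor X Y) (g : Mor Y Z) :
  is_iso f -> is_iso g -> is_iso (comp g f).
Proof.
move=> [f' [f'f ff']] [g' [g'g gg']]; exists (comp f' g'); split.
  by rewrite compmA -(compmA f') g'g compm1.
by rewrite compmA -(compmA g) ff' compm1.
Qed.

Lemma iso_sigm (X Y : Ob) (f : Mor X Y) : is_iso f -> is_iso (sigm f).
Proof. by move=> [f' [f'f ff']]; exists (sigm f'); rewrite -!sigmM f'f ff' !sigm1. Qed.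

Lemma iso_cancel (X Y W : Ob) (f : Mor X Y) (k k' : Mor W X) :
  is_iso f -> comp f k = comp f k' -> k = k'.
Proof. by move=> [f' [f'f _]] fk; rewrite -(comp1m k) -(comp1m k') -f'f -!compmA fk. Qed.

Lemma iso_unipotent (X : Ob) (e : Mor X X) : comp e e = 0 -> is_iso (idm X + e).
Proof.
by move=> ee; exists (idm X - e); split; comp_norm; rewrite ee subr0 ?addrNK ?addrK.
Qed.

Lemma iso_obj_Sig (X Y : Ob) (f : Mor (Sig X) (Sig Y)) : is_iso f -> iso_obj X Y.
Proof.
move=> [f' [f'f ff']]; have [g eg] := sigm_surj f; have [g' eg'] := sigm_surj f'.
rewrite {}eg {}eg' -!sigmM -!sigm1 in f'f ff'.
by exists g, g'; split; apply: sigm_inj.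
Qed.

Section FiveLemma.
Variables (X Y Z X' Y' Z' : Ob) (f : Mor X Y) (g : Mor Y Z) (h : Mor Z (Sig X)).
Variables (f' : Mor X' Y') (g' : Mor Y' Z') (h' : Mor Z' (Sig X')).
Variables (x : Mor X X') (y : Mor Y Y') (z : Mor Z Z').
Hypotheses (ex : hom_exact3 f g h) (ex' : hom_exact3 f' g' h').
Hypotheses (iso_x : is_iso x) (iso_y : is_iso y).
Hypotheses (fx : comp f' x = comp y f) (gy : comp g' y = comp z g).
Hypothesis (hz : comp h' z = comp (sigm x) h).

Lemma five_lemma_epi (W : Ob) (t : Mor W Z') : exists k : Mor W Z, t = comp z k.
Proof.
have [_ [_ g_h] [_ h_Sf]] := ex; have [_ [_ g'_h'] [Sf'h' _]] := ex'.
have [x' [_ xx']] := iso_x; have [y' [_ yy']] := iso_y.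
have Sxx' V (k : Mor V (Sig X')) : comp (sigm x) (comp (sigm x') k) = k.
  by rewrite compmA -sigmM xx' sigm1 comp1m.
pose s := comp (sigm x') (comp h' t).
have Sfs : comp (sigm f) s = 0.
  apply: (iso_cancel (iso_sigm iso_y)); rewrite compm0 /s compmA -sigmM -fx sigmM.
  by rewrite -compmA Sxx' compmA Sf'h' comp0m.
have [k sk] := h_Sf _ _ Sfs.
have [m em] : exists m, t - comp z k = comp g' m.
  by apply: g'_h'; rewrite compmDr compmN compmA hz -compmA -sk /s Sxx' subrr.
exists (k + comp g (comp y' m)).
by rewrite compmDr compmA -gy -compmA (compmA y) yy' comp1m -em addrC subrK.
Qed.

Lemma five_lemma_mono (W : Ob) (k : Mor W Z) : comp z k = 0 -> k = 0.
Proof.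
have [[gf _] [_ g_h] _] := ex; have [[_ f'_g'] _ _] := ex'.
have [x' [_ xx']] := iso_x.
move=> zk; have hk : comp h k = 0.
  by apply: (iso_cancel (iso_sigm iso_x)); rewrite compm0 compmA -hz -compmA zk compm0.
have [m km] := g_h _ _ hk.
have [n yn] : exists n, comp y m = comp f' n.
  by apply: f'_g'; rewrite compmA gy -compmA -km.
have mfn : m = comp f (comp x' n).
  by apply: (iso_cancel iso_y); rewrite yn compmA -fx -compmA (compmA x) xx' comp1m.
by rewrite km mfn compmA gf comp0m.
Qed.

Lemma five_lemma : is_iso z.
Proof.
have [s zs] := five_lemma_epi (idm Z'); exists s; split=> //.
apply/eqP; rewrite -subr_eq0; apply/eqP/five_lemma_mono.
by rewrite compmDr compmN compmA -zs comp1m compm1 subrr.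
Qed.

End FiveLemma.

Record biprod (X1 X2 : Ob) := Biprod {
  bp_obj : Ob;
  bp_in1 : Mor X1 bp_obj;
  bp_in2 : Mor X2 bp_obj;
  bp_pr1 : Mor bp_obj X1;
  bp_pr2 : Mor bp_obj X2;
  bp_ax : is_biproduct bp_in1 bp_in2 bp_pr1 bp_pr2 }.

Lemma exists_biprod (X1 X2 : Ob) : inhabited (biprod X1 X2).
Proof.
case: hT => -[_ _ /(_ X1 X2) [P [i1 [i2 [p1 [p2 bP]]]]]] _ _ _ _.
exact: inhabits (Biprod bP).
Qed.

Lemma biprod_ofP (X1 X2 : Ob) (b : biprod X1 X2) : biprod_of X1 X2 (bp_obj b).
Proof. by exists (bp_in1 b), (bp_in2 b), (bp_pr1 b), (bp_pr2 b); apply: bp_ax. Qed.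

Section BiprodLaws.
Variables (X1 X2 : Ob) (b : biprod X1 X2).

Lemma bp_pr1_in1 : comp (bp_pr1 b) (bp_in1 b) = idm X1. Proof. by case: (bp_ax b). Qed.
Lemma bp_pr2_in2 : comp (bp_pr2 b) (bp_in2 b) = idm X2. Proof. by case: (bp_ax b). Qed.
Lemma bp_pr1_in2 : comp (bp_pr1 b) (bp_in2 b) = 0. Proof. by case: (bp_ax b). Qed.
Lemma bp_pr2_in1 : comp (bp_pr2 b) (bp_in1 b) = 0. Proof. by case: (bp_ax b). Qed.

Lemma bp_pr1_in1K (W : Ob) (k : Mor W X1) : comp (bp_pr1 b) (comp (bp_in1 b) k) = k.
Proof. by rewrite compmA bp_pr1_in1 comp1m. Qed.
Lemma bp_pr2_in2K (W : Ob) (k : Mor W X2) : comp (bp_pr2 b) (comp (bp_in2 b) k) = k.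
Proof. by rewrite compmA bp_pr2_in2 comp1m. Qed.
Lemma bp_pr1_in2K (W : Ob) (k : Mor W X2) : comp (bp_pr1 b) (comp (bp_in2 b) k) = 0.
Proof. by rewrite compmA bp_pr1_in2 comp0m. Qed.
Lemma bp_pr2_in1K (W : Ob) (k : Mor W X1) : comp (bp_pr2 b) (comp (bp_in1 b) k) = 0.
Proof. by rewrite compmA bp_pr2_in1 comp0m. Qed.

Lemma bp_idm : comp (bp_in1 b) (bp_pr1 b) + comp (bp_in2 b) (bp_pr2 b) = idm (bp_obj b).
Proof. by case: (bp_ax b). Qed.

Lemma bp_decomp (W : Ob) (k : Mor W (bp_obj b)) :
  comp (bp_in1 b) (comp (bp_pr1 b) k) + comp (bp_in2 b) (comp (bp_pr2 b) k) = k.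
Proof. by rewrite !compmA -compmDl bp_idm comp1m. Qed.

End BiprodLaws.

Ltac bp_simpl b :=
  rewrite ?(bp_pr1_in1K b) ?(bp_pr2_in2K b) ?(bp_pr1_in2K b) ?(bp_pr2_in1K b)
          ?(bp_pr1_in1 b) ?(bp_pr2_in2 b) ?(bp_pr1_in2 b) ?(bp_pr2_in1 b).

Lemma is_biproduct_Sig (X1 X2 P : Ob) (i1 : Mor X1 P) (i2 : Mor X2 P)
    (p1 : Mor P X1) (p2 : Mor P X2) :
  is_biproduct i1 i2 p1 p2 -> is_biproduct (sigm i1) (sigm i2) (sigm p1) (sigm p2).
Proof.
case=> e11 e22 e12 e21 e; split; rewrite -?sigmM ?e11 ?e22 ?e12 ?e21 ?sigm0 ?sigm1 //.
by rewrite -sigmD e sigm1.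
Qed.

Definition Sig_biprod (X1 X2 : Ob) (b : biprod X1 X2) : biprod (Sig X1) (Sig X2) :=
  Biprod (is_biproduct_Sig (bp_ax b)).

Definition bp_diag (X1 X2 Y1 Y2 : Ob) (bX : biprod X1 X2) (bY : biprod Y1 Y2)
    (f1 : Mor X1 Y1) (f2 : Mor X2 Y2) : Mor (bp_obj bX) (bp_obj bY) :=
  comp (bp_in1 bY) (comp f1 (bp_pr1 bX)) + comp (bp_in2 bY) (comp f2 (bp_pr2 bX)).

Section Diagonal.
Variables (X1 X2 Y1 Y2 : Ob) (bX : biprod X1 X2) (bY : biprod Y1 Y2).
Variables (f1 : Mor X1 Y1) (f2 : Mor X2 Y2).

Lemma bp_pr1_diag : comp (bp_pr1 bY) (bp_diag bX bY f1 f2) = comp f1 (bp_pr1 bX).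
Proof. by rewrite /bp_diag; comp_norm; bp_simpl bY; comp_norm. Qed.

Lemma bp_pr2_diag : comp (bp_pr2 bY) (bp_diag bX bY f1 f2) = comp f2 (bp_pr2 bX).
Proof. by rewrite /bp_diag; comp_norm; bp_simpl bY; comp_norm. Qed.

Lemma bp_diag_in1 : comp (bp_diag bX bY f1 f2) (bp_in1 bX) = comp (bp_in1 bY) f1.
Proof. by rewrite /bp_diag; comp_norm; bp_simpl bX; comp_norm. Qed.

Lemma bp_diag_in2 : comp (bp_diag bX bY f1 f2) (bp_in2 bX) = comp (bp_in2 bY) f2.
Proof. by rewrite /bp_diag; comp_norm; bp_simpl bX; comp_norm. Qed.

Lemma bp_diag_comp (Z1 Z2 : Ob) (bZ : biprod Z1 Z2) (g1 : Mor Y1 Z1) (g2 : Mor Y2 Z2) :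
  comp (bp_diag bY bZ g1 g2) (bp_diag bX bY f1 f2) = bp_diag bX bZ (comp g1 f1) (comp g2 f2).
Proof.
by rewrite {1}/bp_diag compmDl -!compmA bp_pr1_diag bp_pr2_diag /bp_diag; comp_norm.
Qed.

Lemma sigm_diag :
  sigm (bp_diag bX bY f1 f2) = bp_diag (Sig_biprod bX) (Sig_biprod bY) (sigm f1) (sigm f2).
Proof. by rewrite /bp_diag /=; comp_norm. Qed.

End Diagonal.

Lemma bp_diag0 (X1 X2 Y1 Y2 : Ob) (bX : biprod X1 X2) (bY : biprod Y1 Y2) :
  bp_diag bX bY 0 0 = 0.
Proof. by rewrite /bp_diag; comp_norm. Qed.

Lemma hom_exact_diag (X1 X2 Y1 Y2 Z1 Z2 : Ob)
    (bX : biprod X1 X2) (bY : biprod Y1 Y2) (bZ : biprod Z1 Z2)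
    (f1 : Mor X1 Y1) (g1 : Mor Y1 Z1) (f2 : Mor X2 Y2) (g2 : Mor Y2 Z2) :
  hom_exact f1 g1 -> hom_exact f2 g2 -> hom_exact (bp_diag bX bY f1 f2) (bp_diag bY bZ g1 g2).
Proof.
move=> [g1f1 ex1] [g2f2 ex2]; split; first by rewrite bp_diag_comp g1f1 g2f2 bp_diag0.
move=> W k gk.
have [n1 e1] : exists n1, comp (bp_pr1 bY) k = comp f1 n1.
  by apply: ex1; rewrite compmA -(bp_pr1_diag bY bZ g1 g2) -compmA gk compm0.
have [n2 e2] : exists n2, comp (bp_pr2 bY) k = comp f2 n2.
  by apply: ex2; rewrite compmA -(bp_pr2_diag bY bZ g1 g2) -compmA gk compm0.
exists (comp (bp_in1 bX) n1 + comp (bp_in2 bX) n2).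
by rewrite compmDr !compmA bp_diag_in1 bp_diag_in2 -!compmA -e1 -e2 bp_decomp.
Qed.

Lemma hom_exact3_diag (A1 A2 B1 B2 C1 C2 : Ob)
    (bA : biprod A1 A2) (bB : biprod B1 B2) (bC : biprod C1 C2)
    (a1 : Mor A1 B1) (b1 : Mor B1 C1) (c1 : Mor C1 (Sig A1))
    (a2 : Mor A2 B2) (b2 : Mor B2 C2) (c2 : Mor C2 (Sig A2)) :
  hom_exact3 a1 b1 c1 -> hom_exact3 a2 b2 c2 ->
  hom_exact3 (bp_diag bA bB a1 a2) (bp_diag bB bC b1 b2) (bp_diag bC (Sig_biprod bA) c1 c2).
Proof.
move=> [ab1 bc1 ca1] [ab2 bc2 ca2].
split; first exact (hom_exact_diag bA bB bC ab1 ab2).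
  exact (hom_exact_diag bB bC (Sig_biprod bA) bc1 bc2).
by rewrite sigm_diag; exact (hom_exact_diag bC (Sig_biprod bA) (Sig_biprod bB) ca1 ca2).
Qed.

Lemma dist_biprod (A1 A2 B1 B2 C1 C2 : Ob)
    (bA : biprod A1 A2) (bB : biprod B1 B2) (bC : biprod C1 C2)
    (a1 : Mor A1 B1) (b1 : Mor B1 C1) (c1 : Mor C1 (Sig A1))
    (a2 : Mor A2 B2) (b2 : Mor B2 C2) (c2 : Mor C2 (Sig A2)) :
  dist a1 b1 c1 -> dist a2 b2 c2 ->
  dist (bp_diag bA bB a1 a2) (bp_diag bB bC b1 b2) (bp_diag bC (Sig_biprod bA) c1 c2).
Proof.
move=> d1 d2; set a := bp_diag bA bB a1 a2.
have [C0 [b0 [c0 d0]]] := dist_cone a.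
have [w1 [b0w1 c0w1]] := dist_fill d1 d0 (bp_diag_in1 bA bB a1 a2).
have [w2 [b0w2 c0w2]] := dist_fill d2 d0 (bp_diag_in2 bA bB a1 a2).
pose w := comp w1 (bp_pr1 bC) + comp w2 (bp_pr2 bC).
have wb : comp w (bp_diag bB bC b1 b2) = b0.
  rewrite compmDl -!compmA bp_pr1_diag bp_pr2_diag !compmA -b0w1 -b0w2.
  by rewrite -!compmA -compmDr bp_idm compm1.
have cw : comp c0 w = bp_diag bC (Sig_biprod bA) c1 c2.
  by rewrite compmDr !compmA c0w1 c0w2 -!compmA.
have iso_w : is_iso w.
  apply: (five_lemma (hom_exact3_diag bA bB bC (dist_hom_exact3 d1) (dist_hom_exact3 d2))
            (dist_hom_exact3 d0) (iso_idm _) (iso_idm _)).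
  - by rewrite comp1m compm1.
  - by rewrite compm1 wb.
  - by rewrite cw sigm1 comp1m.
have [w' [w'w ww']] := iso_w.
apply: (dist_iso d0 (iso_idm _) (iso_idm _) (w := w')).
- by exists w.
- by rewrite comp1m compm1.
- by rewrite compm1 -wb compmA w'w comp1m.
- by rewrite sigm1 comp1m -cw -compmA ww' compm1.
Qed.

Lemma dist_split (X Y : Ob) (b : biprod X Y) : dist (bp_in1 b) (bp_pr2 b) 0.
Proof.
have [Z zZ] := exists_zero; have Z0 := zero_idm zZ.
have bXZ : is_biproduct (idm X) (0 : Mor Z X) (idm X) 0.
  by split; comp_norm; rewrite ?Z0.
have bZY : is_biproduct (0 : Mor Z Y) (idm Y) 0 (idm Y).
  by split; comp_norm; rewrite ?Z0.
move: (dist_biprod (Biprod bXZ) b (Biprod bZY) (dist_idm X zZ) (dist_zero_idm Y zZ)).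
by rewrite /bp_diag /=; comp_norm.
Qed.

Lemma dist_iso_third (X Y Z X' Y' Z' : Ob)
    (f : Mor X Y) (g : Mor Y Z) (h : Mor Z (Sig X))
    (f' : Mor X' Y') (g' : Mor Y' Z') (h' : Mor Z' (Sig X'))
    (u : Mor Z Z') (v : Mor (Sig X) (Sig X')) :
  dist f g h -> dist f' g' h' -> is_iso u -> is_iso v -> comp h' u = comp v h ->
  iso_obj Y Y'.
Proof.
move=> d d' iso_u iso_v sq.
have r := dist_rot (dist_rot d); have r' := dist_rot (dist_rot d').
have [z [sq2 sq3]] := dist_fill r r' sq.
exact/iso_obj_Sig/(five_lemma (dist_hom_exact3 r) (dist_hom_exact3 r') iso_u iso_v sq sq2 sq3).
Qed.

Lemma bp_diag_arrow_iso (X1 X2 Y1 Y2 : Ob) (bX : biprod X1 X2) (bY : biprod Y1 Y2)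
    (c1 : Mor X1 Y1) (c2 : Mor X2 Y2)
    (w : Mor X1 X2) (w' : Mor X2 X1) (u : Mor Y1 Y2) (u' : Mor Y2 Y1) :
  comp c2 w = comp u c1 -> comp c1 w' = comp u' c2 ->
  comp c2 (comp w w') = c2 -> comp c1 (comp w' w) = c1 ->
  exists (p : Mor (bp_obj bX) (bp_obj bX)) (q : Mor (bp_obj bY) (bp_obj bY)),
    [/\ is_iso p, is_iso q & comp (bp_diag bX bY 0 c2) p = comp q (bp_diag bX bY c1 0)].
Proof.
move=> c2w c1w' c2ww' c1w'w.
(* As matrices: [[1,-u'],[0,1]] [[1,0],[u,1]] [[c1,0],[0,0]] and
   [[0,0],[0,c2]] [[1,0],[w,1]] [[1,-w'],[0,1]] both equal [[0,0],[c2 w,0]]. *)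
pose ew := comp (bp_in2 bX) (comp w (bp_pr1 bX)).
pose ew' := comp (bp_in1 bX) (comp w' (bp_pr2 bX)).
pose eu := comp (bp_in2 bY) (comp u (bp_pr1 bY)).
pose eu' := comp (bp_in1 bY) (comp u' (bp_pr2 bY)).
exists (comp (idm _ + ew) (idm _ - ew')), (comp (idm _ - eu') (idm _ + eu)); split.
- by apply: iso_comp; apply: iso_unipotent; rewrite /ew /ew'; comp_norm; bp_simpl bX; comp_norm.
- by apply: iso_comp; apply: iso_unipotent; rewrite /eu /eu'; comp_norm; bp_simpl bY; comp_norm.
have c2ww'K V (k : Mor V X2) : comp c2 (comp w (comp w' k)) = comp c2 k.
  by rewrite (compmA w) compmA c2ww'.
have c1w'wK V (k : Mor V X1) : comp c1 (comp w' (comp w k)) = comp c1 k.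
  by rewrite (compmA w') compmA c1w'w.
have uc1K V (k : Mor V X1) : comp u (comp c1 k) = comp c2 (comp w k).
  by rewrite !compmA c2w.
have u'c2K V (k : Mor V X2) : comp u' (comp c2 k) = comp c1 (comp w' k).
  by rewrite !compmA c1w'.
rewrite /bp_diag /ew /ew' /eu /eu'; comp_norm; bp_simpl bX; bp_simpl bY; comp_norm.
rewrite c2ww'K uc1K u'c2K c1w'wK.
by rewrite addrCA subrr addr0 addrAC subrr add0r.
Qed.

Lemma ImY_iso_factor (C D C' D' : Ob) (c : Mor C D) (c' : Mor C' D') :
  ImY_iso c c' ->
  exists (w : Mor C C') (w' : Mor C' C),
    [/\ comp c' (comp w w') = c', comp c (comp w' w) = c,
        forall (X : Ob) (k : Mor X C), comp c k = 0 -> comp c' (comp w k) = 0 &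
        forall (X : Ob) (k : Mor X C'), comp c' k = 0 -> comp c (comp w' k) = 0].
Proof.
case=> phi [phi_im phiD phi_inj phi_surj phi_nat].
have Imc X (k : Mor X C) : ImY c (comp c k) by exists k.
have Imcc : ImY c c by exists (idm C); rewrite compm1.
have Im0 X : ImY c (0 : Mor X D) by exists 0; rewrite compm0.
have phi0 X : phi X 0 = 0.
  by apply: (addIr (phi X 0)); rewrite -phiD // !add0r.
have [w phic] := phi_im C c Imcc.
have [_ [w' ->] phicw'] := phi_surj C' c' (ex_intro _ (idm C') (esym (compm1 c'))).
have phi_comp X (k : Mor X C) : phi X (comp c k) = comp c' (comp w k).
  by rewrite phi_nat // phic compmA.
have phi_compw' X (k : Mor X C') : phi X (comp c (comp w' k)) = comp c' k.
  by rewrite compmA phi_nat // phicw'.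
exists w, w'; split.
- by rewrite -phi_comp phicw'.
- by apply: phi_inj => //; rewrite phi_compw' phic.
- by move=> X k ck; rewrite -phi_comp ck phi0.
- by move=> X k c'k; apply: phi_inj => //; rewrite phi_compw' phi0.
Qed.

Lemma dist_biprod_iso (A B C A' B' C' : Ob)
    (a : Mor A B) (b : Mor B C) (c : Mor C (Sig A))
    (a' : Mor A' B') (b' : Mor B' C') (c' : Mor C' (Sig A'))
    (w : Mor C C') (w' : Mor C' C) (u : Mor (Sig A) (Sig A')) (u' : Mor (Sig A') (Sig A)) :
  dist a b c -> dist a' b' c' ->
  comp c' w = comp u c -> comp c w' = comp u' c' ->
  comp c' (comp w w') = c' -> comp c (comp w' w) = c ->
  exists (S : biprod A C) (S' : biprod A' C')
         (P : biprod B (bp_obj S')) (P' : biprod (bp_obj S) B'),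
    iso_obj (bp_obj P) (bp_obj P').
Proof.
move=> d d' c'w cw' c'ww' cw'w.
have [bA] := exists_biprod A A'; have [bC] := exists_biprod C C'.
have [S] := exists_biprod A C; have [S'] := exists_biprod A' C'.
have [P] := exists_biprod B (bp_obj S'); have [P'] := exists_biprod (bp_obj S) B'.
have dP := dist_biprod bA P bC d (dist_split S').
have dP' := dist_biprod bA P' bC (dist_split S) d'.
have [p [q [iso_p iso_q pq]]] := bp_diag_arrow_iso bC (Sig_biprod bA) c'w cw' c'ww' cw'w.
by exists S, S', P, P'; apply: dist_iso_third dP dP' iso_p iso_q pq.
Qed.

End Triangulated.

Lemma alternating_sum_eq (V : zmodType) (a b c a' b' c' : V) :
  b + (a' + c') = a + c + b' -> a - b + c = a' - b' + c'.
Proof.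
move=> E; apply/eqP; rewrite (addrAC a) (addrAC a') subr_eq (addrAC _ (- b')) eq_sym subr_eq -E.
by rewrite addrC.
Qed.

Theorem mainTheorem15 (T : TriData) (hT : is_triangulated T)
  (hsplit : idempotents_split T)
  (A B C A' B' C' : Ob T)
  (a : Mor A B) (b : Mor B C) (c : Mor C (Sig A))
  (a' : Mor A' B') (b' : Mor B' C') (c' : Mor C' (Sig A'))
  (ht : dist a b c) (ht' : dist a' b' c')
  (hiso : ImY_iso c c') :
  K0sp_eq A B C A' B' C'.
Proof.
have [w [w' [c'ww' cw'w cw c'w']]] := ImY_iso_factor hT hiso.
have [u c'w] : exists u, comp c' w = comp u c.
  have cb := dist_comp0 hT (dist_rot hT ht).
  by apply: (dist_factor_l hT (dist_rot hT ht)); rewrite -compmA // cw.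
have [u' cw'] : exists u', comp c w' = comp u' c'.
  have c'b' := dist_comp0 hT (dist_rot hT ht').
  by apply: (dist_factor_l hT (dist_rot hT ht')); rewrite -compmA // c'w'.
have [S [S' [P [P' PP']]]] := dist_biprod_iso hT ht ht' c'w cw' c'ww' cw'w.
move=> G F [F_iso F_biprod].
move: (F_iso _ _ PP').
rewrite (F_biprod _ _ _ (biprod_ofP P)) (F_biprod _ _ _ (biprod_ofP P')).
rewrite (F_biprod _ _ _ (biprod_ofP S)) (F_biprod _ _ _ (biprod_ofP S')).
exact: alternating_sum_eq.
Qed.
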